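(* Let $n\ge 1$, $M\ge1$ be integers and $a=(a_0,\dots,a_n)\in\mathbb{Z}^{n+1}$ with $0\le a_i\le M$ and $a_0=a_n=0$. Let $V=\{j+i/(2n+2): 0\le j<M,\ 0\le i\le 2n+2,\ i,j\in\mathbb{Z}\}$, $W=V^{2n+1}$, and let $G_0$ be the directed graph defined below. Then: (i) if $y=(y_j)_{j\in\mathbb{Z}}$ is a tropical recurrent minimal sequence with all $y_j\in V$ satisfying $a$, then every letter $Y_i=(y_i,\dots,y_{i+2n})$ of the sequence $Y=Y(y)=(Y_i)_{i\in\mathbb{Z}}$ is a vertex of $G_0$ and there is an arrow in $G_0$ from $Y_i$ to $Y_{i+1}$ for every $i$; thus $Y$ gives a bi-infinite path $p(Y)$ in $G_0$; (ii) conversely, for every bi-infinite path $p$ in $G_0$ there is a unique tropical recurrent minimal sequence $y$ with values in $V$ satisfying $a$ such that $p=p(Y(y))$; (iii) $y$ is periodic with period $d$ if and only if $Y(y)$ is periodic with period $d$.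
   Context: A vector $z=(z_0,\dots,z_N)\in\mathbb{R}^{N+1}$ satisfies $a$ and is minimal if for each $0\le k\le N-n$ the minimum $\min_{0\le i\le n}\{a_i+z_{i+k}\}$ is attained at least twice, and for each $n\le j\le N-n$ there exists $j-n\le k\le j$ with $a_{j-k}+z_j=\min_{0\le i\le n}\{a_i+z_{k+i}\}$. The graph $G_0$ has as vertices the elements $(z_0,\dots,z_{2n})\in W$ which (with $N=2n$) satisfy $a$ and are minimal; there is an arrow from $(z_0,\dots,z_{2n})$ to $(z'_0,\dots,z'_{2n})$ iff $z_{i+1}=z'_i$ for $0\le i\le 2n-1$ (loops allowed). A tropical recurrent sequence is $y=(y_j)_{j\in\mathbb{Z}}$ with real entries; it satisfies $a$ if for every $k\in\mathbb{Z}$ the minimum $\min_{0\le i\le n}\{a_i+y_{i+k}\}$ is attained for at least two different $i$; it is minimal if for every $j$ there is $k$ with $j-n\le k\le j$ and $a_{j-k}+y_j=\min_{0\le i\le n}\{a_i+y_{i+k}\}$. A sequence $(x_j)_{j\in\mathbb{Z}}$ (of numbers or of letters of $W$) is periodic with period $d\ge 1$ if $x_{j+d}=x_j$ for all $j$. *)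

From HB Require Import structures.
From mathcomp Require Import all_boot all_order all_algebra.
From mathcomp Require Import reals.
Unset Printing Implicit Defensive.
Import Order.TTheory GRing.Theory Num.Theory.
Local Open Scope ring_scope.

Section TropDefs.
Context {R : realType}.

Definition inV (n M : nat) (x : R) : Prop :=
  exists j i : nat, (j < M)%N /\ (i <= n.*2.+2)%N /\
    x = j%:R + i%:R / (n.*2.+2)%:R.

Definition tminN (a : nat -> int) (n : nat) (z : nat -> R) (k : nat) : R :=
  \big[Num.min/((a 0%N)%:~R + z k)]_(i < n.+1) ((a i)%:~R + z (i + k)%N).

Definition satisfies_fin (a : nat -> int) (n N : nat) (z : nat -> R) : Prop :=
  forall k : nat, (k <= N - n)%N ->
    exists i1 i2 : nat, [/\ i1 != i2, (i1 <= n)%N, (i2 <= n)%N,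
      (a i1)%:~R + z (i1 + k)%N = tminN a n z k &
      (a i2)%:~R + z (i2 + k)%N = tminN a n z k].

Definition minimal_fin (a : nat -> int) (n N : nat) (z : nat -> R) : Prop :=
  forall j : nat, (n <= j)%N -> (j <= N - n)%N ->
    exists k : nat, [/\ (j - n <= k)%N, (k <= j)%N &
      (a (j - k)%N)%:~R + z j = tminN a n z k].

Definition letter (n : nat) := {ffun 'I_(n.*2.+1) -> R}.

Definition lget (n : nat) (z : letter n) (i : nat) : R := z (inord i).

Definition G0_vertex (n M : nat) (a : nat -> int) (z : letter n) : Prop :=
  (forall i : 'I_(n.*2.+1), inV n M (z i)) /\
  satisfies_fin a n n.*2 (lget n z) /\ minimal_fin a n n.*2 (lget n z).

Definition G0_arrow (n : nat) (z z' : letter n) : Prop :=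
  forall i : nat, (i <= n.*2 - 1)%N -> lget n z (i.+1) = lget n z' i.

Definition G0_path (n M : nat) (a : nat -> int) (p : int -> letter n) : Prop :=
  forall i : int, G0_vertex n M a (p i) /\ G0_arrow n (p i) (p (i + 1)).

Definition tmin (a : nat -> int) (n : nat) (y : int -> R) (k : int) : R :=
  \big[Num.min/((a 0%N)%:~R + y k)]_(i < n.+1) ((a i)%:~R + y (i%:Z + k)).

Definition trop_satisfies (a : nat -> int) (n : nat) (y : int -> R) : Prop :=
  forall k : int,
    exists i1 i2 : nat, [/\ i1 != i2, (i1 <= n)%N, (i2 <= n)%N,
      (a i1)%:~R + y (i1%:Z + k) = tmin a n y k &
      (a i2)%:~R + y (i2%:Z + k) = tmin a n y k].

Definition trop_minimal (a : nat -> int) (n : nat) (y : int -> R) : Prop :=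
  forall j : int, exists k : int, [/\ j - n%:Z <= k, k <= j &
      (a `|j - k|%N)%:~R + y j = tmin a n y k].

Definition Yseq (n : nat) (y : int -> R) : int -> letter n :=
  fun i => [ffun m : 'I_(n.*2.+1) => y (i + (m : nat)%:Z)].

Definition periodic {T : Type} (x : int -> T) (d : nat) : Prop :=
  forall j : int, x (j + d%:Z) = x j.

End TropDefs.

From mathcomp Require Import all_boot all_order all_algebra.
From mathcomp Require Import reals.
From mathcomp Require Import zify.
From Stdlib Require Import FunctionalExtensionality.
Import Order.TTheory GRing.Theory Num.Theory.
Local Open Scope ring_scope.

(* The tropical condition at [k] only involves [y_k, ..., y_(k+n)], and
   minimality at [j] only involves [y_(j-n), ..., y_(j+n)]; both windows fit
   in a letter [Y_i] of length [2n+1].  Hence [y] is a minimal tropical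
   recurrent sequence iff every letter of [Y(y)] is a vertex of [G_0], and
   consecutive letters of [Y(y)] overlap exactly as an arrow of [G_0]
   requires.  Conversely, following arrows shows that the [m]-th entry of a
   vertex of a path is the first entry of the vertex [m] steps later, so a
   path is [Y(y)] for the sequence [y] of first entries.  The argument is
   purely combinatorial: of the hypotheses on [n], [M] and [a] only [1 <= n]
   is used (for the arrows). *)

Section Windows.
Local Set Implicit Arguments.
Variables (R : realType) (n : nat).
Implicit Types (y : int -> R) (a : nat -> int).

Lemma lget_Yseq y i m : (m <= n.*2)%N -> lget n (Yseq n y i) m = y (i + m%:Z).
Proof. by move=> le_m; rewrite /lget /Yseq ffunE inordK // ltnS. Qed.

Lemma lget_Yseq0 y i : lget n (Yseq n y i) 0 = y i.
Proof. by rewrite lget_Yseq // addr0. Qed.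

Lemma Yseq_inj : injective (@Yseq R n).
Proof.
move=> y y' eq_Y; apply: functional_extensionality => j.
by rewrite -(lget_Yseq0 y j) -(lget_Yseq0 y' j) eq_Y.
Qed.

Lemma tminN_Yseq a y i k : (k <= n)%N ->
  tminN a n (lget n (Yseq n y i)) k = tmin a n y (i + k%:Z).
Proof.
move=> le_k; rewrite /tminN /tmin lget_Yseq; last by rewrite -addnn; lia.
apply: eq_bigr => l _; rewrite lget_Yseq; last by have := ltn_ord l; rewrite -addnn; lia.
by rewrite PoszD addrCA.
Qed.

Lemma satisfies_fin_Yseq a y i :
  trop_satisfies a n y -> satisfies_fin a n n.*2 (lget n (Yseq n y i)).
Proof.
move=> sat_y k; rewrite -addnn addnK => le_k.
have [i1 [i2 [neq_i le_i1 le_i2 min_i1 min_i2]]] := sat_y (i + k%:Z).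
exists i1, i2; split=> //; rewrite tminN_Yseq // lget_Yseq -?addnn; try lia.
- by rewrite -min_i1 PoszD addrCA.
- by rewrite -min_i2 PoszD addrCA.
Qed.

Lemma minimal_fin_Yseq a y i :
  trop_minimal a n y -> minimal_fin a n n.*2 (lget n (Yseq n y i)).
Proof.
move=> min_y j le_nj; rewrite -addnn addnK => le_jn.
have -> : j = n by apply/eqP; rewrite eqn_leq le_jn le_nj.
have [k [le_k ge_k min_k]] := min_y (i + n%:Z).
have def_k : k = i + (`|k - i|%N)%:Z by lia.
exists `|k - i|%N; split; try lia.
rewrite tminN_Yseq; last by lia.
rewrite lget_Yseq; last by rewrite -addnn; lia.
rewrite -def_k -min_k; congr (_%:~R + _); congr a; lia.
Qed.

Lemma G0_vertex_Yseq M a y i : (forall j, inV n M (y j)) ->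
  trop_satisfies a n y -> trop_minimal a n y -> G0_vertex n M a (Yseq n y i).
Proof.
move=> inV_y sat_y min_y; split; first by move=> m; rewrite ffunE.
by split; [apply: satisfies_fin_Yseq | apply: minimal_fin_Yseq].
Qed.

Lemma G0_arrow_Yseq y i : (0 < n)%N -> G0_arrow n (Yseq n y i) (Yseq n y (i + 1)).
Proof.
move=> n_gt0 m le_m; rewrite !lget_Yseq; try (move: le_m; rewrite -addnn; lia).
congr y; lia.
Qed.

Lemma trop_satisfies_Yseq a y :
  (forall i, satisfies_fin a n n.*2 (lget n (Yseq n y i))) -> trop_satisfies a n y.
Proof.
move=> sat_Y k; have [i1 [i2 [neq_i le_i1 le_i2]]] := sat_Y k 0%N (leq0n _).
rewrite tminN_Yseq // !lget_Yseq -?addnn ?addn0 ?addr0; try lia.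
by rewrite !(addrC k) => min_i1 min_i2; exists i1, i2.
Qed.

Lemma trop_minimal_Yseq a y :
  (forall i, minimal_fin a n n.*2 (lget n (Yseq n y i))) -> trop_minimal a n y.
Proof.
move=> min_Y j.
have [k [le_k ge_k]] := min_Y (j - n%:Z) n (leqnn _) ltac:(rewrite -addnn; lia).
rewrite tminN_Yseq // lget_Yseq -?addnn; try lia.
rewrite subrK => min_k; exists (j - n%:Z + k%:Z); split; try lia.
by rewrite -min_k; congr (_%:~R + _); congr a; lia.
Qed.

Lemma periodic_Yseq y d : periodic (Yseq n y) d <-> periodic y d.
Proof.
split=> per j; last by apply/ffunP => m; rewrite !ffunE addrAC per.
by rewrite -(lget_Yseq0 y (j + d%:Z)) per lget_Yseq0.
Qed.

Definition path_seq (p : int -> letter n) : int -> R := fun j => lget n (p j) 0.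

Lemma lget_G0_path M a p : G0_path n M a p ->
  forall m, (m <= n.*2)%N -> forall j, lget n (p j) m = path_seq p (j + m%:Z).
Proof.
move=> path_p; elim=> [|m IHm] le_m j; first by rewrite addr0.
rewrite (path_p j).2; last by move: le_m; rewrite -addnn; lia.
rewrite IHm; last by lia.
by congr path_seq; lia.
Qed.

Lemma G0_path_Yseq M a p : G0_path n M a p -> p = Yseq n (path_seq p).
Proof.
move=> path_p; apply: functional_extensionality => j; apply/ffunP => m.
rewrite ffunE -(lget_G0_path path_p); last by have := ltn_ord m; lia.
by rewrite /lget inord_val.
Qed.

End Windows.

Theorem lemma1 (R : realType) (n M : nat) (a : nat -> int)
  (hn : (1 <= n)%N) (hM : (1 <= M)%N)
  (ha : forall i : nat, (i <= n)%N -> 0 <= a i <= M%:Z)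
  (ha0 : a 0%N = 0) (han : a n = 0) :
  (* (i) *)
  (forall y : int -> R,
     (forall j, inV n M (y j)) -> trop_satisfies a n y -> trop_minimal a n y ->
     forall i : int, G0_vertex n M a (Yseq n y i) /\
                     G0_arrow n (Yseq n y i) (Yseq n y (i + 1)))
  /\
  (* (ii) *)
  (forall p : int -> @letter R n, G0_path n M a p ->
     exists! y : int -> R,
       (forall j, inV n M (y j)) /\ trop_satisfies a n y /\
       trop_minimal a n y /\ p = Yseq n y)
  /\
  (* (iii) *)
  (forall y : int -> R,
     (forall j, inV n M (y j)) -> trop_satisfies a n y -> trop_minimal a n y ->
     forall d : nat, (1 <= d)%N ->
       (periodic y d <-> periodic (Yseq n y) d)).
Proof.
split; first by move=> y inV_y sat_y min_y i; split;
  [apply: G0_vertex_Yseq | apply: G0_arrow_Yseq].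
split; last by move=> y _ _ _ d _; rewrite periodic_Yseq.
move=> p path_p; exists (path_seq p).
have def_p := G0_path_Yseq path_p.
have vertex_Y i : G0_vertex n M a (Yseq n (path_seq p) i).
  by rewrite -def_p; exact: (path_p i).1.
split; last by move=> y [_ [_ [_ def_p']]]; apply: (@Yseq_inj R n); rewrite -def_p.
split; [|split; [|split]] => //.
- by move=> j; have := (vertex_Y j).1 ord0; rewrite ffunE addr0.
- by apply: trop_satisfies_Yseq => i; exact: (vertex_Y i).2.1.
- by apply: trop_minimal_Yseq => i; exact: (vertex_Y i).2.2.
Qed.
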